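(* Let $G=(V,E)$ be a finite graph and suppose that both $I_1,\dots,I_d$ and $\bar I_1,\dots,\bar I_{\bar d}$ are partitions of $V$ into maximal independent sets characterizing $G$ as a mean valid graph. If $|I_j|\ne|\bar I_k|$, then $I_j\cap\bar I_k=\emptyset$.
   Context: A partition $V=I_1\sqcup\dots\sqcup I_d$ ($d\ge2$) of the vertex set into pairwise disjoint maximal independent sets, ordered with $|I_1|\ge\dots\ge|I_d|$, characterizes $G$ as a mean valid graph if every independent set $I$ of $G$ satisfies $\sum_{s=1}^d|I\cap I_s|/|I_s|\le1$. *)

From mathcomp Require Import all_boot all_order all_algebra.
Set Implicit Arguments. Unset Strict Implicit. Unset Printing Implicit Defensive.
Import Order.TTheory GRing.Theory Num.Theory.

Definition simple_graph (T : finType) (e : rel T) : Prop :=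
  symmetric e /\ irreflexive e.

Definition independent (T : finType) (e : rel T) (S : {set T}) : Prop :=
  forall x y, x \in S -> y \in S -> ~~ e x y.

Definition maximal_independent (T : finType) (e : rel T) (S : {set T}) : Prop :=
  independent e S /\
  (forall S' : {set T}, independent e S' -> S \subset S' -> S' = S).

(* V = I_1 ⊔ ... ⊔ I_d, d >= 2, pairwise disjoint maximal independent sets,
   ordered |I_1| >= ... >= |I_d| (indices 0..d-1). *)
Definition mis_partition (T : finType) (e : rel T) (d : nat) (I : 'I_d -> {set T}) : Prop :=
  [/\ (2 <= d)%N,
      (forall i, maximal_independent e (I i)),
      (forall i j, i != j -> [disjoint I i & I j]),
      (forall x : T, exists i, x \in I i) &
      (forall i j : 'I_d, (i <= j)%N -> (#|I j| <= #|I i|)%N)].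

Definition mean_valid_partition (T : finType) (e : rel T) (d : nat) (I : 'I_d -> {set T}) : Prop :=
  mis_partition e I /\
  (forall S : {set T}, independent e S ->
     (\sum_(s < d) (#|S :&: I s|%:R / #|I s|%:R : rat) <= 1)%R).

(* Weight each vertex v by w_P(v) = 1/|P(v)|, where P(v) is the block of the
   partition P containing v.  Then w_P sums to 1 on each block of P, to the
   number of blocks over all of V, and its sum over an independent set S is
   exactly the mean-valid quantity of S.  For two mean-valid partitions I, Ib
   with d and db blocks, summing the bounds "w_I(Ib_t) <= 1" over the blocks
   of Ib gives d <= db, and symmetrically, so every block of Ib has w_I-mass
   exactly 1 and vice versa.  Hence <w_I, w_Ib> = sum_s 1/|I_s| = <w_I, w_I>
   and likewise <w_I, w_Ib> = <w_Ib, w_Ib>, so |w_I - w_Ib|^2 = 0 and the two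
   weights agree.  On a vertex of I_j :&: Ib_k this reads 1/|I_j| = 1/|Ib_k|. *)

From mathcomp Require Import all_boot all_order all_algebra.
From mathcomp Require Import ring.
Import Order.TTheory GRing.Theory Num.Theory.
Set Implicit Arguments. Unset Strict Implicit. Unset Printing Implicit Defensive.
Local Open Scope ring_scope.

Lemma sum_le1_le_card (R : numDomainType) (n : nat) (F : 'I_n -> R) :
  (forall i, F i <= 1) -> \sum_i F i <= n%:R.
Proof.
move=> F_le1; rewrite -[n in n%:R]card_ord -sumr_const.
by apply: ler_sum => i _; apply: F_le1.
Qed.

Lemma sum_le1_ge_card_eq1 (R : numDomainType) (n : nat) (F : 'I_n -> R) :
  (forall i, F i <= 1) -> n%:R <= \sum_i F i -> forall i, F i = 1.
Proof.
move=> F_le1 card_le i; apply/eqP; rewrite eq_sym -subr_eq0; apply/eqP.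
have gap_ge0 t : 0 <= 1 - F t by rewrite subr_ge0.
have gaps0 : \sum_t (1 - F t) = 0.
  apply/eqP; rewrite eq_le sumr_ge0 // andbT.
  by rewrite sumrB sumr_const card_ord -[_ *+ _]mulr_natl mulr1 subr_le0.
exact: (psumr_eq0P (fun t _ => gap_ge0 t) gaps0).
Qed.

Section BlockWeight.
Variables (R : numFieldType) (T : finType) (n : nat) (P : 'I_n -> {set T}).
Hypothesis P_disjoint : forall i j, i != j -> [disjoint P i & P j].
Hypothesis P_cover : forall x : T, exists i, x \in P i.
Hypothesis P_neq0 : forall i, (0 < #|P i|)%N.

Definition block_weight (v : T) : R := \sum_s (v \in P s)%:R / #|P s|%:R.

Lemma notin_other_block v s s' : v \in P s' -> s != s' -> v \notin P s.
Proof.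
by move=> vs' /P_disjoint; rewrite disjoint_sym => /disjointFr->.
Qed.

Lemma block_weightE v s : v \in P s -> block_weight v = (#|P s|%:R)^-1.
Proof.
move=> vs; rewrite /block_weight (bigD1 s) //= vs big1 ?addr0 ?mul1r //.
by move=> i ni; rewrite (negbTE (notin_other_block vs ni)) mul0r.
Qed.

Lemma sum_over_blocks (f : T -> R) : \sum_v f v = \sum_s \sum_(v in P s) f v.
Proof.
under [RHS]eq_bigr do rewrite big_mkcond /=.
rewrite exchange_big /=; apply: eq_bigr => v _.
have [s vs] := P_cover v.
rewrite (bigD1 s) //= vs big1 ?addr0 // => i ni.
by rewrite (negbTE (notin_other_block vs ni)).
Qed.

Lemma sum_block_weightM (g : T -> R) :
  \sum_v block_weight v * g v = \sum_s (#|P s|%:R)^-1 * \sum_(v in P s) g v.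
Proof.
rewrite sum_over_blocks; apply: eq_bigr => s _; rewrite big_distrr /=.
by apply: eq_bigr => v vs; rewrite (block_weightE vs).
Qed.

Lemma block_weight_block s : \sum_(v in P s) block_weight v = 1.
Proof.
rewrite (eq_bigr (fun _ => (#|P s|%:R)^-1)); last by move=> v /block_weightE.
by rewrite sumr_const -[_ *+ _]mulr_natl mulfV // pnatr_eq0 -lt0n P_neq0.
Qed.

Lemma sum_block_weightM_block1 (g : T -> R) :
    (forall s, \sum_(v in P s) g v = 1) ->
  \sum_v block_weight v * g v = \sum_v block_weight v * block_weight v.
Proof.
move=> g_block1; rewrite !sum_block_weightM; apply: eq_bigr => s _.
by rewrite g_block1 block_weight_block.
Qed.

Lemma block_weight_total : \sum_v block_weight v = n%:R.
Proof.
rewrite sum_over_blocks (eq_bigr (fun _ => 1)) => [|s _]; last first.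
  exact: block_weight_block.
by rewrite sumr_const card_ord.
Qed.

Lemma block_weight_set (S : {set T}) :
  \sum_(v in S) block_weight v = \sum_s #|S :&: P s|%:R / #|P s|%:R.
Proof.
rewrite exchange_big /=; apply: eq_bigr => s _.
rewrite -big_distrl /=; congr (_ * _).
rewrite -sum1_card natr_sum big_mkcond [RHS]big_mkcond /=.
by apply: eq_bigr => v _; rewrite inE; case: (v \in S); case: (v \in P s).
Qed.

End BlockWeight.

Section TwoPartitions.
Variables (R : numFieldType) (T : finType) (m n : nat).
Variables (P : 'I_m -> {set T}) (Q : 'I_n -> {set T}).
Hypotheses (P_disjoint : forall i j, i != j -> [disjoint P i & P j])
           (P_cover : forall x : T, exists i, x \in P i)
           (P_neq0 : forall i, (0 < #|P i|)%N).
Hypotheses (Q_disjoint : forall i j, i != j -> [disjoint Q i & Q j])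
           (Q_cover : forall x : T, exists i, x \in Q i).
Hypothesis wP_Q_le1 : forall t, \sum_(v in Q t) block_weight R P v <= 1.

Lemma block_weight_cross_total : \sum_t \sum_(v in Q t) block_weight R P v = m%:R.
Proof.
by rewrite -(sum_over_blocks Q_disjoint Q_cover) block_weight_total.
Qed.

Lemma card_le_block_weight_cross : (m <= n)%N.
Proof. by rewrite -(ler_nat R) -block_weight_cross_total sum_le1_le_card. Qed.

Lemma block_weight_cross_eq1 : (n <= m)%N ->
  forall t, \sum_(v in Q t) block_weight R P v = 1.
Proof.
move=> le_nm; apply: (sum_le1_ge_card_eq1 wP_Q_le1).
by rewrite block_weight_cross_total ler_nat.
Qed.

End TwoPartitions.

Lemma block_weight_unique (R : realFieldType) (T : finType) (m n : nat)
    (P : 'I_m -> {set T}) (Q : 'I_n -> {set T}) :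
    (forall i j, i != j -> [disjoint P i & P j]) ->
    (forall x : T, exists i, x \in P i) -> (forall i, (0 < #|P i|)%N) ->
    (forall i j, i != j -> [disjoint Q i & Q j]) ->
    (forall x : T, exists i, x \in Q i) -> (forall i, (0 < #|Q i|)%N) ->
    (forall t, \sum_(v in Q t) block_weight R P v <= 1) ->
    (forall s, \sum_(v in P s) block_weight R Q v <= 1) ->
  block_weight R P =1 block_weight R Q.
Proof.
move=> Pd Pc Pn Qd Qc Qn PQ QP v.
set wP := block_weight R P in PQ *; set wQ := block_weight R Q in QP *.
have le_mn := card_le_block_weight_cross Pd Pc Pn Qd Qc PQ.
have le_nm := card_le_block_weight_cross Qd Qc Qn Pd Pc QP.
have QdotP := sum_block_weightM_block1 Qd Qc Qn
  (block_weight_cross_eq1 Pd Pc Pn Qd Qc PQ le_nm).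
have PdotQ := sum_block_weightM_block1 Pd Pc Pn
  (block_weight_cross_eq1 Qd Qc Qn Pd Pc QP le_mn).
have dist0 : \sum_u (wP u - wQ u) ^+ 2 = 0.
  have -> : \sum_u (wP u - wQ u) ^+ 2 =
      (\sum_u wP u * wP u - \sum_u wP u * wQ u)
    + (\sum_u wQ u * wQ u - \sum_u wQ u * wP u).
    rewrite -!sumrB -big_split /=; apply: eq_bigr => u _; ring.
  by rewrite PdotQ QdotP !subrr addr0.
have /eqP := psumr_eq0P (fun u _ => sqr_ge0 (wP u - wQ u)) dist0 (i := v) isT.
by rewrite sqrf_eq0 subr_eq0 => /eqP.
Qed.

Lemma maximal_independent_gt0 (T : finType) (e : rel T) (S : {set T}) (x : T) :
  irreflexive e -> maximal_independent e S -> (0 < #|S|)%N.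
Proof.
move=> irr [_ S_max]; rewrite card_gt0; apply/negP => /eqP S0.
have x_indep : independent e [set x].
  by move=> a b; rewrite !inE => /eqP-> /eqP->; rewrite irr.
have := S_max _ x_indep; rewrite S0 sub0set => /(_ isT) /setP /(_ x).
by rewrite !inE eqxx.
Qed.

Theorem lemma10 (T : finType) (e : rel T) (d db : nat)
  (I : 'I_d -> {set T}) (Ib : 'I_db -> {set T}) :
  simple_graph e ->
  mean_valid_partition e I ->
  mean_valid_partition e Ib ->
  forall (j : 'I_d) (k : 'I_db), #|I j| <> #|Ib k| -> I j :&: Ib k = set0.
Proof.
move=> [_ irr] [[_ I_mis I_dis I_cov _] I_valid]
  [[_ Ib_mis Ib_dis Ib_cov _] Ib_valid] j k card_neq.
apply/setP => x; rewrite inE in_set0; apply/negP => /andP[xIj xIbk].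
have I_gt0 i := maximal_independent_gt0 x irr (I_mis i).
have Ib_gt0 i := maximal_independent_gt0 x irr (Ib_mis i).
have I_Ib_le1 t : \sum_(v in Ib t) block_weight rat I v <= 1.
  by rewrite block_weight_set // I_valid //; case: (Ib_mis t).
have Ib_I_le1 s : \sum_(v in I s) block_weight rat Ib v <= 1.
  by rewrite block_weight_set // Ib_valid //; case: (I_mis s).
have := block_weight_unique I_dis I_cov I_gt0 Ib_dis Ib_cov Ib_gt0
  I_Ib_le1 Ib_I_le1 x.
rewrite (block_weightE rat I_dis xIj) (block_weightE rat Ib_dis xIbk).
by move=> /invr_inj /eqP; rewrite eqr_nat => /eqP.
Qed.
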